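(* For any rational number $t>1/2$, there exist no minimally $t$-tough split graphs.
   Context: All graphs are finite, simple and undirected. A graph is split if its vertex set can be partitioned into a clique and an independent set. $\omega(H)$ denotes the number of components of $H$. A cutset of $G$ is a vertex set $S$ with $G-S$ disconnected. For positive real $t$, $G$ is $t$-tough if $\omega(G-S)\le |S|/t$ for every cutset $S$; the toughness $\tau(G)$ is the largest such $t$, with $\tau(K_n)=\infty$ for all $n\ge1$. $G$ is minimally $t$-tough if $\tau(G)=t$ and $\tau(G-e)<t$ for every edge $e$ of $G$. *)

From mathcomp Require Import all_boot all_order all_algebra.
Set Implicit Arguments. Unset Strict Implicit. Unset Printing Implicit Defensive.
Import Order.TTheory GRing.Theory Num.Theory.
Local Open Scope ring_scope.

(* A finite simple graph: vertex set a finType V, edge relation e : rel V,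
   assumed symmetric and irreflexive (hypotheses of the theorem). *)

Section Graphs.
Variable V : finType.

Definition restr (e : rel V) (S : {set V}) : rel V :=
  fun x y => [&& x \notin S, y \notin S & e x y].

Definition ncomp (e : rel V) (S : {set V}) : nat :=
  #|[set [set y | (y \notin S) && connect (restr e S) x y] | x in ~: S]|.

Definition cutset (e : rel V) (S : {set V}) : Prop := (2 <= ncomp e S)%N.

Definition tough (e : rel V) (t : rat) : Prop :=
  0 < t /\ forall S : {set V}, cutset e S -> (ncomp e S)%:R <= (#|S|)%:R / t.

(* tau(G) = t, for t > 0: G is t-tough and not t'-tough for any t' > t
   (tau = "largest t with G t-tough"; tau(K_n) = +oo is never finite). *)
Definition tau_eq (e : rel V) (t : rat) : Prop :=
  tough e t /\ forall t' : rat, t < t' -> ~ tough e t'.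

(* tau(G) < t, for t > 0: G is not t'-tough for any t' >= t
   (covers tau(G) = 0 when no positive t' works, and excludes tau = +oo). *)
Definition tau_lt (e : rel V) (t : rat) : Prop :=
  forall t' : rat, t <= t' -> ~ tough e t'.

Definition del_edge (e : rel V) (u v : V) : rel V :=
  fun x y => e x y && ~~ (((x == u) && (y == v)) || ((x == v) && (y == u))).

Definition minimally_tough (e : rel V) (t : rat) : Prop :=
  tau_eq e t /\ forall u v : V, e u v -> tau_lt (del_edge e u v) t.

Definition split_graph (e : rel V) : Prop :=
  exists K : {set V},
    (forall x y, x \in K -> y \in K -> x != y -> e x y) /\
    (forall x y, x \notin K -> y \notin K -> ~~ e x y).

End Graphs.

From mathcomp Require Import all_boot all_order all_algebra.
From mathcomp Require Import ring lra zify.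
Import Order.TTheory GRing.Theory Num.Theory.
Set Implicit Arguments. Unset Strict Implicit. Unset Printing Implicit Defensive.
Local Open Scope ring_scope.

(* Take a maximal clique K of the split graph G, with independent set
   I = V \ K; if I is empty, G is complete and has no finite toughness.
   Since t > 1/2, every vertex of I has at least 2t > 1 neighbours in K.
   Let u in K have the most neighbours in I and w the most among K - u.
   Deleting uw changes the components of G - S only if u and w lie outside S
   and have no common neighbour outside S. Then S contains K - {u, w} and all
   common neighbours of u and w, while G - uw - S has at most 2 + n
   components, n counting the vertices of I adjacent to neither u nor w.
   The toughness inequalities of G for the cuts K, K - u and K - w, together
   with a double count of the edges between K and I, give |S| >= t (2 + n).
   So G - uw is still t-tough and G is not minimally t-tough. *)

Section Components.
Variable V : finType.
Implicit Types (e : rel V) (S R : {set V}).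

Lemma restr_sym e S : symmetric e -> symmetric (restr e S).
Proof. by move=> e_sym x y; rewrite /restr e_sym andbCA. Qed.

Lemma eq_ncomp e1 e2 S :
  connect (restr e1 S) =2 connect (restr e2 S) -> ncomp e1 S = ncomp e2 S.
Proof.
move=> eq_con; apply: eq_card => C.
by apply/imsetP/imsetP => -[x xS ->]; exists x => //; apply/setP => y; rewrite !inE eq_con.
Qed.

Lemma ncomp_le_card e S R : symmetric e ->
  (forall x, x \notin S -> exists2 r, r \in R & connect (restr e S) x r) ->
  (ncomp e S <= #|R|)%N.
Proof.
move=> e_sym reachR.
set comp := fun x => [set y | (y \notin S) && connect (restr e S) x y].
apply: leq_trans (leq_imset_card comp R); apply/subset_leq_card/subsetP => C.
case/imsetP => x; rewrite inE => xS ->; have [r rR xr] := reachR x xS.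
apply/imsetP; exists r => //; apply/setP => y; rewrite !inE.
have con_sym := sym_connect_sym (restr_sym S e_sym).
apply: andb_id2l => _; apply/idP/idP => [ry | ry]; last exact: connect_trans xr ry.
by apply: connect_trans ry; rewrite con_sym.
Qed.

Lemma card_le_ncomp e S R : R \subset ~: S ->
  {in R &, forall x y, connect (restr e S) x y -> x = y} -> (#|R| <= ncomp e S)%N.
Proof.
move=> RS sepR.
set comp := fun x => [set y | (y \notin S) && connect (restr e S) x y].
rewrite -(@card_in_imset _ _ comp) => [|x y xR yR eq_xy].
  exact/subset_leq_card/imsetS.
apply: sepR => //; have : y \in comp y.
  by rewrite inE connect0 andbT -in_setC (subsetP RS).
by rewrite -eq_xy inE => /andP[].
Qed.

Lemma connect_isolated (r : rel V) x y : (forall z, r x z = false) -> connect r x y -> y = x.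
Proof. by move=> x_iso /connectP[[|z p]] //=; rewrite x_iso. Qed.

Lemma complete_ncomp_le1 e S : symmetric e -> (forall x y, x != y -> e x y) ->
  (ncomp e S <= 1)%N.
Proof.
move=> e_sym e_full; case: (pickP (fun x => x \notin S)) => [x0 x0S | S_full].
  rewrite -(cards1 x0); apply: ncomp_le_card => // x xS; exists x0; first exact: set11.
  have [-> | xx0] := eqVneq x x0; first exact: connect0.
  by apply: connect1; rewrite /restr xS x0S e_full.
apply: leq_trans (ncomp_le_card (R := set0) e_sym _) _ => [x xS|]; last by rewrite cards0.
by move: (S_full x); rewrite /= xS.
Qed.

Lemma tough_ncomp e t S c : tough e t -> (2 <= c <= ncomp e S)%N ->
  t * c%:R <= #|S|%:R.
Proof.
case=> t_gt0 e_tough /andP[c2 c_le].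
have := e_tough S (leq_trans c2 c_le); rewrite ler_pdivlMr // mulrC.
by apply: le_trans; rewrite ler_pM2l // ler_nat.
Qed.

Lemma complete_tough e t : symmetric e -> (forall x y, x != y -> e x y) -> 0 < t ->
  tough e t.
Proof.
move=> e_sym e_full t_gt0; split=> // S S_cut.
by have := leq_trans S_cut (complete_ncomp_le1 S e_sym e_full).
Qed.

End Components.

Section EdgeDeletion.
Variables (V : finType) (e : rel V) (u w : V).
Hypothesis e_sym : symmetric e.
Implicit Types S : {set V}.

Lemma del_edge_sym : symmetric (del_edge e u w).
Proof.
move=> x y; rewrite /del_edge e_sym; congr (_ && ~~ _).
by rewrite orbC [(y == u) && _]andbC [(y == w) && _]andbC.
Qed.

Lemma ncomp_del_edge_endpoint S : (u \in S) || (w \in S) ->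
  ncomp (del_edge e u w) S = ncomp e S.
Proof.
move=> uwS; apply/eq_ncomp/eq_connect => a b; rewrite /restr /del_edge.
case: (boolP (a \in S)) => //= aS; case: (boolP (b \in S)) => //= bS.
apply/andb_idr => _; apply: contraL uwS.
by case/orP=> /andP[/eqP <- /eqP <-]; rewrite negb_or ?aS ?bS.
Qed.

Lemma ncomp_del_edge_common S z : irreflexive e ->
  z \notin S -> e u z -> e z w -> ncomp (del_edge e u w) S = ncomp e S.
Proof.
move=> e_irr zS euz ezw; apply: eq_ncomp => x y; apply/idP/idP; apply: connect_sub => a b.
  by case/and3P=> aS bS /andP[eab _]; apply: connect1; rewrite /restr aS bS.
case/and3P=> aS bS eab.
have [zu zw] : z != u /\ z != w.
  by split; apply: contraTneq isT => zE; [move: euz | move: ezw]; rewrite zE e_irr.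
have path_uzw : u \notin S -> w \notin S -> connect (restr (del_edge e u w) S) u w.
  move=> uS wS; apply: (connect_trans (y := z)); apply: connect1;
  by rewrite /restr /del_edge ?uS ?wS zS ?euz ?ezw !(negbTE zu) !(negbTE zw) ?andbF.
have con_sym := sym_connect_sym (restr_sym S del_edge_sym).
case del: (((a == u) && (b == w)) || ((a == w) && (b == u))).
  by case/orP: del aS bS => /andP[/eqP-> /eqP->] aS bS; last rewrite con_sym; apply: path_uzw.
by apply: connect1; rewrite /restr /del_edge aS bS eab del.
Qed.

End EdgeDeletion.

(* In the three lemmas below k = |K|, m = |I|, a >= b are the numbers of
   neighbours of u and w in I, c the number of common ones and n the number of
   vertices of I adjacent to neither; a + (k - 1) b bounds the number of edges
   between K and I. *)
Lemma degree_arith_disjoint (k m a b n : nat) (t : rat) :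
  1 / 2 < t -> (n + a + b = m)%N -> (b <= a)%N -> (0 < m)%N ->
  m%:R * 2 <= a%:R + (k%:R - 1) * b%:R :> rat ->
  m%:R * (2 * t) <= a%:R + (k%:R - 1) * b%:R ->
  ((a < m)%N -> t * (1 + m%:R - a%:R) <= k%:R - 1) ->
  t * (2 + n%:R) <= k%:R - 2.
Proof.
move=> t_gt sum_eq b_le_a m_gt0 sum_ge2 sum_ge2t cut_a.
rewrite leNgt; apply/negP => bad.
have m1 : 1 <= m%:R :> rat by rewrite ler1n.
have ab : b%:R <= a%:R :> rat by rewrite ler_nat.
have n_eq : n%:R = m%:R - a%:R - b%:R :> rat by rewrite -sum_eq !natrD; ring.
have [a_ge | a_lt] := leqP m a.
  have [b0 am] : b = 0%N /\ a = m by lia.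
  by move: sum_ge2; rewrite b0 am mulr0 addr0; lra.
have split_t : t * (2 + n%:R) = t * (1 + m%:R - a%:R) + t * (1 - b%:R).
  by rewrite n_eq; ring.
have {}cut_a := cut_a a_lt.
have b_le2 : (b <= 2)%N.
  rewrite leqNgt; apply/negP => b3.
  have b3R : 3 <= b%:R :> rat by rewrite (ler_nat _ 3).
  have : t * 2 <= t * (b%:R - 1) by apply: ler_wpM2l; lra.
  lra.
have : [\/ b%:R = 0 :> rat, b%:R = 1 :> rat | b%:R = 2 :> rat].
  by case: (b) b_le2 => [|[|[|]]] // _; [constructor 1 | constructor 2 | constructor 3].
have a0 : 0 <= a%:R :> rat by [].
have n0 : 0 <= n%:R :> rat by [].
by case=> b_eq; move: sum_ge2 sum_ge2t split_t; rewrite b_eq => ? ? ?; nra.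
Qed.

Lemma degree_arith_common (k m a b n c : nat) (t : rat) :
  1 / 2 < t -> (n + a + b = m + c)%N -> (0 < c <= b)%N -> (b <= a)%N -> (b < m)%N ->
  m%:R * 2 <= a%:R + (k%:R - 1) * b%:R :> rat ->
  m%:R * (2 * t) <= a%:R + (k%:R - 1) * b%:R ->
  t * (1 + m%:R - b%:R) <= k%:R - 1 ->
  t * m%:R <= k%:R ->
  t * (2 + n%:R) <= k%:R - 2 + c%:R.
Proof.
move=> t_gt sum_eq /andP[c_gt0 c_le_b] b_le_a b_lt_m sum_ge2 sum_ge2t cut_b cut_K.
rewrite leNgt; apply/negP => bad.
have c1 : 1 <= c%:R :> rat by rewrite ler1n.
have n_eq : n%:R = m%:R + c%:R - a%:R - b%:R :> rat.
  by apply/eqP; rewrite eq_sym !subr_eq -!natrD -sum_eq addnAC.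
have key : c%:R - 1 < t * (1 + c%:R - a%:R).
  have : t * (2 + n%:R) = t * (1 + m%:R - b%:R) + t * (1 + c%:R - a%:R) by rewrite n_eq; ring.
  lra.
have a_le_c : (a <= c)%N.
  rewrite leqNgt; apply/negP => c_lt_a.
  have caR : c%:R + 1 <= a%:R :> rat by rewrite natr1 ler_nat.
  have : 0 <= t * (a%:R - c%:R - 1) by apply: mulr_ge0; lra.
  lra.
have [ac bc] : a = c /\ b = c by lia.
rewrite ac bc in n_eq sum_ge2 sum_ge2t.
have c_lt2 : c%:R < 2 :> rat.
  rewrite ltNge; apply/negP => c2.
  have : 0 <= t * (c%:R - 2) by apply: mulr_ge0; lra.
  have : t * (2 + n%:R) = t * m%:R - t * (c%:R - 2) by rewrite n_eq; ring.
  lra.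
have c_eq1 : c%:R = 1 :> rat.
  by have -> : c = 1%N by move: c_lt2; rewrite (ltr_nat _ _ 2); lia.
have m2 : 2 <= m%:R :> rat by rewrite (ler_nat _ 2); lia.
rewrite c_eq1 in n_eq sum_ge2 sum_ge2t bad.
nra.
Qed.

Lemma degree_arith (k m a b n c : nat) (t : rat) :
  1 / 2 < t -> (n + a + b = m + c)%N -> (c <= b <= a)%N -> (a <= m)%N -> (0 < m)%N ->
  2 * t <= k%:R - 1 ->
  m%:R * 2 <= a%:R + (k%:R - 1) * b%:R :> rat ->
  m%:R * (2 * t) <= a%:R + (k%:R - 1) * b%:R ->
  ((a < m)%N -> t * (1 + m%:R - a%:R) <= k%:R - 1) ->
  ((b < m)%N -> t * (1 + m%:R - b%:R) <= k%:R - 1) ->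
  ((2 <= m)%N -> t * m%:R <= k%:R) ->
  t * (2 + n%:R) <= k%:R - 2 + c%:R.
Proof.
move=> t_gt sum_eq /andP[c_le_b b_le_a] a_le_m m_gt0 k_ge sum_ge2 sum_ge2t cut_a cut_b cut_K.
have [m_le_b | b_lt_m] := leqP m b.
  have [-> ->] : n = 0%N /\ c = m by lia.
  have : 1 <= m%:R :> rat by rewrite ler1n.
  rewrite addr0; lra.
have [c0 | c_gt0] := posnP c.
  by rewrite c0 addr0; apply: (@degree_arith_disjoint k m a b n t) => //; lia.
by apply: (@degree_arith_common k m a b n c t) => //;
  [rewrite c_gt0 | exact: cut_b | apply: cut_K; lia].
Qed.

Section SplitGraph.
Variables (V : finType) (e : rel V) (K : {set V}).
Hypotheses (e_sym : symmetric e) (e_irr : irreflexive e).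
Hypothesis K_clique : forall x y, x \in K -> y \in K -> x != y -> e x y.
Hypothesis I_indep : forall x y, x \notin K -> y \notin K -> ~~ e x y.
Implicit Types (S Z : {set V}).

Definition nbrK y := [set z in K | e y z].
Definition nbrI z := [set y in ~: K | e y z].
Definition unreached Z := [set y in ~: K | [forall z in Z, ~~ e y z]].

Lemma unreached_isolated Z y : Z \subset K -> y \in unreached Z ->
  forall z, restr e (K :\: Z) y z = false.
Proof.
move=> ZK; rewrite !inE => /andP[yK /forall_inP y_Z] z.
apply/negbTE/negP; case/and3P=> _; rewrite !inE negb_and negbK => zZK eyz.
have [zK | zK] := boolP (z \in K); last by rewrite (negbTE (I_indep yK zK)) in eyz.
by rewrite zK orbF in zZK; move: (y_Z z zZK); rewrite eyz.
Qed.

Lemma ncomp_clique_setD Z : Z \subset K ->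
  ((Z != set0) + #|unreached Z| <= ncomp e (K :\: Z))%N.
Proof.
move=> ZK; have iso y (yU : y \in unreached Z) := unreached_isolated ZK yU.
have U_out : unreached Z \subset ~: (K :\: Z).
  by apply/subsetP => y; rewrite !inE => /andP[/negbTE-> _]; rewrite andbF.
have [Z0 | [z0 z0Z]] := set_0Vmem Z.
  rewrite Z0 eqxx add0n -Z0; apply: card_le_ncomp => // x y xU _ /connect_isolated.
  by move=> /(_ (iso x xU)) ->.
have z0U : z0 \notin unreached Z by rewrite !inE (subsetP ZK z0 z0Z).
have -> : (Z != set0) = (z0 \notin unreached Z) by rewrite z0U; apply/set0Pn; exists z0.
rewrite -cardsU1; apply: card_le_ncomp.
  by rewrite subUset sub1set !inE z0Z U_out.
have con_sym := sym_connect_sym (restr_sym (K :\: Z) e_sym).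
move=> x y; rewrite !in_setU1 => /predU1P[-> | xU] /predU1P[-> | yU] // con_xy.
- by rewrite con_sym in con_xy; rewrite (connect_isolated (iso y yU) con_xy).
- by rewrite (connect_isolated (iso x xU) con_xy).
- by rewrite (connect_isolated (iso x xU) con_xy).
Qed.

Lemma sum_card_nbrK :
  (\sum_(y in ~: K) #|nbrK y| = \sum_(z in K) #|nbrI z|)%N.
Proof.
have card_sum A (P : pred V) : #|[set x in A | P x]| = (\sum_(x in A | P x) 1)%N.
  by rewrite -sum1_card; apply: eq_bigl => x; rewrite inE.
rewrite (eq_bigr (fun y => \sum_(z in K | e y z) 1)%N) => [|y _]; last exact: card_sum.
rewrite (exchange_big_dep (mem K)) => [|y z _ /andP[] //] /=.
by apply: eq_bigr => z zK; rewrite /nbrI card_sum; apply: eq_bigl => y; rewrite zK.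
Qed.

Lemma nbrI_sub z : nbrI z \subset ~: K.
Proof. by apply/subsetP => y; rewrite inE => /andP[]. Qed.

Lemma card_unreached2 u w :
  (#|unreached [set u; w]| + #|nbrI u| + #|nbrI w| = #|~: K| + #|nbrI u :&: nbrI w|)%N.
Proof.
have -> : unreached [set u; w] = ~: K :\: (nbrI u :|: nbrI w).
  apply/setP => y; rewrite !inE andbC; case: (y \in K); rewrite ?andbF ?andbT //=.
  apply/forall_inP/norP => [y_uw | [yu yw] z]; last by rewrite !inE => /orP[] /eqP->.
  by split; apply: y_uw; rewrite !inE eqxx ?orbT.
have nbr_sub : nbrI u :|: nbrI w \subset ~: K by rewrite subUset !nbrI_sub.
rewrite (cardsDS nbr_sub); have := cardsUI (nbrI u) (nbrI w).
by have := subset_leq_card nbr_sub; lia.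
Qed.

Section SeparatedCut.
Variables (u w : V) (S : {set V}).
Hypotheses (uK : u \in K) (wK : w \in K).
Hypothesis no_common_nbr : forall z, z \notin S -> ~~ (e u z && e z w).

Lemma clique_setD_sub : K :\: S \subset [set u; w].
Proof.
apply/subsetP => z; rewrite !inE => /andP[zS zK]; apply: contraR (no_common_nbr zS).
by rewrite negb_or => /andP[zu zw]; rewrite !K_clique // eq_sym.
Qed.

Lemma card_sep_cut : u != w -> (#|K| + #|nbrI u :&: nbrI w| <= #|S| + 2)%N.
Proof.
move=> uw; have KS_sub : K :\: [set u; w] \subset S :&: K.
  apply/subsetP => z; rewrite !inE negb_or => /andP[/andP[zu zw] zK]; rewrite zK andbT.
  apply: contraR zu => zS; have := subsetP clique_setD_sub z.
  by rewrite !inE zS zK (negbTE zw) orbF; apply.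
have common_sub : nbrI u :&: nbrI w \subset S :\: K.
  apply/subsetP => y; rewrite !inE => /andP[/andP[yK eyu] /andP[_ eyw]]; rewrite yK.
  by apply: contraR (no_common_nbr (z := y)) _; rewrite e_sym eyu eyw.
have uw_sub : [set u; w] \subset K by rewrite subUset !sub1set uK wK.
have := cardsID K S; have := subset_leq_card KS_sub; have := subset_leq_card common_sub.
by rewrite (cardsDS uw_sub) cards2 uw; lia.
Qed.

Lemma ncomp_del_edge_sep : u \notin S -> w \notin S ->
  (ncomp (del_edge e u w) S <= 2 + #|unreached [set u; w] :\: S|)%N.
Proof.
move=> uS wS; set R := [set u; w] :|: unreached [set u; w] :\: S.
apply: leq_trans (ncomp_le_card (R := R) (del_edge_sym u w e_sym) _) _; last first.
  by rewrite (leq_trans (leq_card_setU _ _)) // leq_add2r cards2; case: (u != w).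
move=> x xS; have [xK | xK] := boolP (x \in K).
  exists x; last exact: connect0.
  by rewrite inE (subsetP clique_setD_sub) // inE xS.
have [xu xw] : x != u /\ x != w by split; apply: contraNneq xK => ->.
have del_x z : del_edge e u w x z = e x z.
  by rewrite /del_edge (negbTE xu) (negbTE xw) andbT.
have [exu | exu] := boolP (e x u).
  by exists u; rewrite ?inE ?eqxx //; apply: connect1; rewrite /restr xS uS del_x.
have [exw | exw] := boolP (e x w).
  by exists w; rewrite ?inE ?eqxx ?orbT //; apply: connect1; rewrite /restr xS wS del_x.
exists x; last exact: connect0.
rewrite !inE xS xK /=; apply/orP; right; apply/forall_inP => z; rewrite !inE.
by case/orP=> /eqP->.
Qed.

End SeparatedCut.

Section Tough.
Hypothesis K_max : forall y, y \notin K -> exists2 z, z \in K & ~~ e y z.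
Variable t : rat.
Hypothesis e_tough : tough e t.

Lemma tough_clique_setD Z c : Z \subset K ->
  (2 <= c <= (Z != set0) + #|unreached Z|)%N -> t * c%:R <= #|K :\: Z|%:R.
Proof.
move=> ZK /andP[c2 c_le]; apply: tough_ncomp e_tough _.
by rewrite c2 (leq_trans c_le) // ncomp_clique_setD.
Qed.

Lemma card_nbrK_ge y : y \notin K -> 2 * t <= #|nbrK y|%:R.
Proof.
move=> yK; have [z zK yz] := K_max yK.
have nbrK_sub : nbrK y \subset K by apply/subsetP => x; rewrite inE => /andP[].
have <- : K :\: (K :\: nbrK y) = nbrK y by rewrite setDDr setDv set0U; apply/setIidPr.
rewrite mulrC; apply: tough_clique_setD (subsetDl _ _) _.
have -> : (K :\: nbrK y != set0) by apply/set0Pn; exists z; rewrite !inE zK (negbTE yz).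
rewrite /= add1n ltnS card_gt0; apply/set0Pn; exists y; rewrite !inE yK.
by apply/forall_inP => x; rewrite !inE; case: (x \in K); rewrite /= ?andbT.
Qed.

Lemma card_nbrK_lt y : y \notin K -> (#|nbrK y| < #|K|)%N.
Proof.
move=> yK; have [z zK yz] := K_max yK; apply: proper_card; apply/properP; split.
  by apply/subsetP => x; rewrite inE => /andP[].
by exists z; rewrite // inE (negbTE yz) andbF.
Qed.

Lemma unreached0 : unreached set0 = ~: K.
Proof. by apply/setP => y; rewrite !inE andb_idr // => _; apply/forall_inP => z; rewrite inE. Qed.

Lemma tough_clique_cut : (2 <= #|~: K|)%N -> t * #|~: K|%:R <= #|K|%:R.
Proof.
move=> I2; rewrite -{2}(setD0 K); apply: tough_clique_setD (sub0set K) _.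
by rewrite eqxx add0n unreached0 I2 /=.
Qed.

Lemma tough_clique_setD1 u : u \in K -> (#|nbrI u| < #|~: K|)%N ->
  t * (1 + #|~: K|%:R - #|nbrI u|%:R) <= #|K|%:R - 1.
Proof.
move=> uK nbr_lt.
have card_U : (#|unreached [set u]| + #|nbrI u| = #|~: K|)%N.
  by have := card_unreached2 u u; rewrite setUid setIid; lia.
have u_neq0 : [set u] != set0 by apply/set0Pn; exists u; rewrite inE.
have := @tough_clique_setD [set u] (1 + #|unreached [set u]|).
rewrite sub1set uK u_neq0 leqnn andbT add1n ltnS.
have U_pos : (0 < #|unreached [set u]|)%N by lia.
move=> /(_ isT U_pos).
have -> : #|unreached [set u]|.+1%:R = 1 + #|~: K|%:R - #|nbrI u|%:R :> rat.
  by rewrite -card_U natrD -natr1; ring.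
by rewrite [in X in _ <= X - 1](cardsD1 u K) uK add1n -natr1 addrK.
Qed.

Lemma card_nbrK_ge2 y : 1 / 2 < t -> y \notin K -> (2 <= #|nbrK y|)%N.
Proof.
move=> t_gt yK; have := card_nbrK_ge yK => ge2t.
have : (1 : rat) < #|nbrK y|%:R by lra.
by rewrite (ltr_nat _ 1).
Qed.

Lemma degree_bound u w : 1 / 2 < t -> u \in K -> w \in K -> u != w ->
  {in K, forall z, #|nbrI z| <= #|nbrI u|}%N ->
  {in K :\ u, forall z, #|nbrI z| <= #|nbrI w|}%N -> (0 < #|~: K|)%N ->
  t * (2 + #|unreached [set u; w]|%:R) <= #|K|%:R - 2 + #|nbrI u :&: nbrI w|%:R.
Proof.
move=> t_gt uK wK uw u_max w_max I_gt0.
have [y0 y0K] : exists y0, y0 \in ~: K by apply/set0Pn; rewrite -card_gt0.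
rewrite inE in y0K.
set D := (\sum_(y in ~: K) #|nbrK y|)%N.
have D_le : D%:R <= #|nbrI u|%:R + (#|K|%:R - 1) * #|nbrI w|%:R :> rat.
  have : (D <= #|nbrI u| + #|K :\ u| * #|nbrI w|)%N.
    rewrite /D sum_card_nbrK (big_setD1 u uK) leq_add2l -sum_nat_const.
    exact: leq_sum w_max.
  by rewrite -(ler_nat rat) natrD natrM [#|K|](cardsD1 u K) uK add1n -natr1 addrK.
have D_ge2 : (#|~: K| * 2 <= D)%N.
  by rewrite -sum_nat_const /D; apply: leq_sum => y; rewrite inE => /(card_nbrK_ge2 t_gt).
have D_ge2t : #|~: K|%:R * (2 * t) <= D%:R.
  rewrite mulr_natl -sumr_const /D natr_sum; apply: ler_sum => y.
  by rewrite inE => /card_nbrK_ge.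
apply: (@degree_arith #|K| #|~: K| #|nbrI u| #|nbrI w| _ _ t) => //.
- exact: card_unreached2.
- by rewrite subset_leq_card ?subsetIr ?u_max.
- exact/subset_leq_card/nbrI_sub.
- by have := card_nbrK_ge y0K; have := card_nbrK_lt y0K; rewrite -(ler_nat rat) -natr1; lra.
- by apply: le_trans D_le; rewrite -natrM ler_nat.
- by apply: le_trans D_le.
- exact: tough_clique_setD1.
- exact: tough_clique_setD1.
- exact: tough_clique_cut.
Qed.

Lemma tough_del_edge u w : 1 / 2 < t -> u \in K -> w \in K -> u != w ->
  {in K, forall z, #|nbrI z| <= #|nbrI u|}%N ->
  {in K :\ u, forall z, #|nbrI z| <= #|nbrI w|}%N -> (0 < #|~: K|)%N ->
  tough (del_edge e u w) t.
Proof.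
move=> t_gt uK wK uw u_max w_max I_gt0; have t_gt0 : 0 < t by lra.
split=> // S S_cut; rewrite ler_pdivlMr // mulrC.
have by_tough : ncomp (del_edge e u w) S = ncomp e S ->
    t * (ncomp (del_edge e u w) S)%:R <= #|S|%:R.
  by move=> eqS; apply: tough_ncomp e_tough _; rewrite -eqS S_cut leqnn.
have [uwS | ] := boolP ((u \in S) || (w \in S)).
  exact/by_tough/ncomp_del_edge_endpoint.
rewrite negb_or => /andP[uS wS].
have [/existsP[z /and3P[zS euz ezw]] | no_common] :=
  boolP [exists z, [&& z \notin S, e u z & e z w]].
  exact/by_tough/(ncomp_del_edge_common e_sym e_irr zS euz ezw).
have {}no_common z : z \notin S -> ~~ (e u z && e z w).
  by move=> zS; apply: contra no_common => uzw; apply/existsP; exists z; rewrite zS.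
apply: le_trans (_ : t * (2 + #|unreached [set u; w] :\: S|)%:R <= _).
  by rewrite (ler_pM2l t_gt0) ler_nat ncomp_del_edge_sep ?clique_setD_sub.
apply: le_trans (_ : t * (2 + #|unreached [set u; w]|%:R) <= _).
  by rewrite natrD (ler_pM2l t_gt0) lerD2l ler_nat subset_leq_card ?subsetDl.
apply: le_trans (degree_bound t_gt uK wK uw u_max w_max I_gt0) _.
by have := card_sep_cut uK wK no_common uw; rewrite -(ler_nat rat) !natrD; lra.
Qed.

Lemma exists_tough_del_edge : 1 / 2 < t -> (0 < #|~: K|)%N ->
  exists u w, [/\ u \in K, w \in K, u != w & tough (del_edge e u w) t].
Proof.
move=> t_gt I_gt0; have /set0Pn[y0] : ~: K != set0 by rewrite -card_gt0.
rewrite inE => y0K; have N2 := card_nbrK_ge2 t_gt y0K; have K_gt := card_nbrK_lt y0K.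
have /set0Pn[z0 z0K] : K != set0 by rewrite -card_gt0; lia.
case: (@arg_maxnP _ z0 (fun z => z \in K) (fun z => #|nbrI z|) z0K) => u /= uK u_max.
have /set0Pn[z1 z1K] : K :\ u != set0.
  by rewrite -card_gt0; move: K_gt; rewrite (cardsD1 u K) uK; lia.
case: (@arg_maxnP _ z1 (fun z => z \in K :\ u) (fun z => #|nbrI z|) z1K) => w /= wKu w_max.
have [wu wK] : w != u /\ w \in K by apply/andP; rewrite -in_setD1.
have uw : u != w by rewrite eq_sym.
by exists u, w; split => //; apply: tough_del_edge.
Qed.

End Tough.

End SplitGraph.

Lemma split_graph_maximal (V : finType) (e : rel V) : symmetric e -> split_graph e ->
  exists K : {set V}, [/\ forall x y, x \in K -> y \in K -> x != y -> e x y,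
    forall x y, x \notin K -> y \notin K -> ~~ e x y &
    forall y, y \notin K -> exists2 z, z \in K & ~~ e y z].
Proof.
move=> e_sym [K [K_clique I_indep]].
case: (pickP (fun y => (y \notin K) && [forall z in K, e y z])) => [y | no_full].
  case/andP=> yK /forall_inP y_full.
  exists (y |: K); split.
  - move=> x x'; rewrite !in_setU1 => /predU1P[-> | xK] /predU1P[-> | x'K].
    + by rewrite eqxx.
    + by move=> _; apply: y_full.
    + by move=> _; rewrite e_sym; apply: y_full.
    + exact: K_clique.
  - by move=> x x'; rewrite !in_setU1 !negb_or => /andP[_ xK] /andP[_ x'K]; apply: I_indep.
  - move=> x; rewrite in_setU1 negb_or => /andP[xy xK]; exists y; first exact: setU11.
    by rewrite I_indep.
exists K; split=> // y yK; move: (no_full y); rewrite yK /= => /negbT/forall_inPn[z zK yz].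
by exists z.
Qed.

Theorem mainTheorem5 (V : finType) (e : rel V) (t : rat) :
  symmetric e -> irreflexive e -> split_graph e -> 1 / 2 < t ->
  ~ minimally_tough e t.
Proof.
move=> e_sym e_irr /(split_graph_maximal e_sym)[K [K_clique I_indep K_max]] t_gt.
case=> [[e_tough tau_t] min_t].
have [I0 | I_gt0] := posnP #|~: K|.
  have allK x : x \in K by apply: contraT => xK; move: I0; rewrite (cardsD1 x) inE xK.
  apply: (tau_t (t + 1)); first lra.
  by apply: complete_tough => // [x y|]; [exact: K_clique (allK x) (allK y) | lra].
have [u [w [uK wK uw tough_uw]]] :=
  exists_tough_del_edge e_sym e_irr K_clique I_indep K_max e_tough t_gt I_gt0.
exact: min_t u w (K_clique _ _ uK wK uw) t (lexx t) tough_uw.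
Qed.
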